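(* Define $\alpha\equiv\beta$ on $\mathrm{Form}$ by: $\vdash\alpha\to\beta$ and $\vdash\beta\to\alpha$ in the calculus $\mathcal{L}_\Delta$ below. Then (a) $\equiv$ is a congruence on $\mathrm{Form}$ regarded as an $\{\delta,\oplus,\neg,0\}$-algebra (with $\alpha\oplus\beta:=\neg\alpha\to\beta$ and $0:=\neg(\alpha_0\to\alpha_0)$ for a fixed formula $\alpha_0$); and (b) the quotient $\mathrm{Form}/{\equiv}$ is a $\delta$-algebra.
   Context: MV-algebras: algebras $(A,\oplus,\neg,0)$ of type $(2,1,0)$ with $(A,\oplus,0)$ a commutative monoid, $\neg\neg a=a$, $a\oplus\neg0=\neg0$, $\neg(\neg a\oplus b)\oplus b=\neg(\neg b\oplus a)\oplus a$; derived $1:=\neg0$, $a\odot b:=\neg(\neg a\oplus\neg b)$, $a\ominus b:=a\odot\neg b$, $a\vee b:=\neg(\neg a\oplus b)\oplus b$ (join of a lattice order $\le$), $d(a,b):=(a\ominus b)\oplus(b\ominus a)$. A $\delta$-algebra is an algebra $(A,\delta,\oplus,\neg,0)$ of type $(\omega,2,1,0)$ whose MV-reduct is an MV-algebra, satisfying, with $\tfrac12(x):=\delta(x,0,0,\dots)$: (i) $d(\delta(\vec x),\delta(x_1,0,0,\dots))=\delta(0,x_2,x_3,\dots)$; (ii) $\tfrac12(\delta(\vec x))=\delta(\tfrac12(x_1),\tfrac12(x_2),\dots)$; (iii) $\delta(x,x,\dots)=x$; (iv) $\delta(0,\vec x)=\tfrac12(\delta(\vec x))$; (v) $\delta(\vec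 x)\le\delta(x_1\oplus y_1,x_2\oplus y_2,\dots)$; (vi) $\tfrac12(x\ominus y)=\tfrac12(x)\ominus\tfrac12(y)$. Formulas: $\mathrm{Form}$ is the least set containing a fixed countably infinite set of propositional variables and closed under $\alpha\to\beta$, $\neg\alpha$, and $\delta(\langle\alpha_i\rangle)$ for every sequence $\langle\alpha_i\rangle=\alpha_1,\alpha_2,\dots$ indexed by $\omega$. Notation: $\langle\alpha\rangle$ is the constant sequence of value $\alpha$; $\alpha,\langle\beta_i\rangle$ is $\alpha,\beta_1,\beta_2,\dots$; $\langle\alpha_i\rangle_{i>1}$ is $\alpha_2,\alpha_3,\dots$; $\tfrac12\alpha:=\delta(\alpha,\langle\neg(\alpha\to\alpha)\rangle)$; a schema $\alpha\leftrightarrow\beta$ stands for the two schemas $\alpha\to\beta$ and $\beta\to\alpha$. The calculus $\mathcal{L}_\Delta$ has axiom schemata (for all formulas): (Ł1) $\alpha\to(\beta\to\alpha)$; (Ł2) $(\alpha\to\beta)\to((\beta\to\gamma)\to(\alpha\to\gamma))$; (Ł3) $((\alpha\to\beta)\to\beta)\to((\beta\to\alpha)\to\alpha)$; (Ł4) $(\neg\alpha\to\neg\beta)\to(\beta\to\alpha)$; (Δ1) $\neg(\delta(\langle\alpha_i\rangle)\to\tfrac12\alpha_1)\leftrightarrow\tfrac12\delta(\langle\alpha_i\rangle_{i>1})$; (Δ2) $\tfrac12\delta(\langle\alpha_i\rangle)\leftrightarrow\delta(\langle\tfrac12\alpha_i\rangle)$; (Δ3) $\delta(\langle\alpha\rangle)\leftrightarrow\alpha$;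 (Δ4) $\tfrac12\delta(\langle\alpha_i\rangle)\leftrightarrow\delta(\neg(\alpha\to\alpha),\langle\alpha_i\rangle)$; (Δ5) $\delta(\langle\alpha_i\rangle)\to\delta(\langle\neg\alpha_i\to\beta_i\rangle)$; (Δ6) $\tfrac12\neg(\alpha\to\beta)\leftrightarrow\neg(\tfrac12\alpha\to\tfrac12\beta)$; (Δ7) $\delta(\langle\alpha_i\to\beta_i\rangle)\to(\delta(\langle\alpha_i\rangle)\to\delta(\langle\beta_i\rangle))$. Rules: Modus Ponens (from $\alpha$ and $\alpha\to\beta$ infer $\beta$) and the $\delta$-rule (from $\alpha_i$ for all $i\in\omega$ infer $\delta(\langle\alpha_i\rangle)$). A proof of $\alpha$ from $\Theta\subseteq\mathrm{Form}$ is a sequence $(\alpha_i)_{i\in\eta+1}$ of formulas indexed by a successor ordinal $\eta+1$ with $\eta$ countable, such that $\alpha_\eta=\alpha$ and each member is an axiom, an element of $\Theta$, or obtained from earlier members by one of the rules. $\Theta^\vdash$ is the set of formulas provable from $\Theta$; $\vdash\alpha$ means $\alpha\in\emptyset^\vdash$. *)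

From Stdlib Require Import ClassicalEpsilon.

(** * Sequences indexed by omega (index 0 = first element alpha_1) *)
Definition scons {A : Type} (a : A) (s : nat -> A) : nat -> A :=
  fun i => match i with 0 => a | S j => s j end.
Definition stail {A : Type} (s : nat -> A) : nat -> A := fun i => s (S i).
Definition sconst {A : Type} (a : A) : nat -> A := fun _ => a.

Inductive Form : Type :=
| Fvar : nat -> Form
| Fimp : Form -> Form -> Form
| Fneg : Form -> Form
| Fdelta : (nat -> Form) -> Form.

Definition Fhalf (a : Form) : Form :=
  Fdelta (scons a (sconst (Fneg (Fimp a a)))).

Definition Foplus (a b : Form) : Form := Fimp (Fneg a) b.

Inductive LAxiom : Form -> Prop :=
| Ax_L1 : forall a b, LAxiom (Fimp a (Fimp b a))
| Ax_L2 : forall a b c,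
    LAxiom (Fimp (Fimp a b) (Fimp (Fimp b c) (Fimp a c)))
| Ax_L3 : forall a b,
    LAxiom (Fimp (Fimp (Fimp a b) b) (Fimp (Fimp b a) a))
| Ax_L4 : forall a b, LAxiom (Fimp (Fimp (Fneg a) (Fneg b)) (Fimp b a))
| Ax_D1a : forall s : nat -> Form,
    LAxiom (Fimp (Fneg (Fimp (Fdelta s) (Fhalf (s 0))))
                (Fhalf (Fdelta (stail s))))
| Ax_D1b : forall s : nat -> Form,
    LAxiom (Fimp (Fhalf (Fdelta (stail s)))
                (Fneg (Fimp (Fdelta s) (Fhalf (s 0)))))
| Ax_D2a : forall s : nat -> Form,
    LAxiom (Fimp (Fhalf (Fdelta s)) (Fdelta (fun i => Fhalf (s i))))
| Ax_D2b : forall s : nat -> Form,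
    LAxiom (Fimp (Fdelta (fun i => Fhalf (s i))) (Fhalf (Fdelta s)))
| Ax_D3a : forall a, LAxiom (Fimp (Fdelta (sconst a)) a)
| Ax_D3b : forall a, LAxiom (Fimp a (Fdelta (sconst a)))
| Ax_D4a : forall (a : Form) (s : nat -> Form),
    LAxiom (Fimp (Fhalf (Fdelta s)) (Fdelta (scons (Fneg (Fimp a a)) s)))
| Ax_D4b : forall (a : Form) (s : nat -> Form),
    LAxiom (Fimp (Fdelta (scons (Fneg (Fimp a a)) s)) (Fhalf (Fdelta s)))
| Ax_D5 : forall s t : nat -> Form,
    LAxiom (Fimp (Fdelta s) (Fdelta (fun i => Fimp (Fneg (s i)) (t i))))
| Ax_D6a : forall a b,
    LAxiom (Fimp (Fhalf (Fneg (Fimp a b))) (Fneg (Fimp (Fhalf a) (Fhalf b))))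
| Ax_D6b : forall a b,
    LAxiom (Fimp (Fneg (Fimp (Fhalf a) (Fhalf b))) (Fhalf (Fneg (Fimp a b))))
| Ax_D7 : forall s t : nat -> Form,
    LAxiom (Fimp (Fdelta (fun i => Fimp (s i) (t i)))
                (Fimp (Fdelta s) (Fdelta t))).

Inductive ProvFrom (Theta : Form -> Prop) : Form -> Prop :=
| PF_ax : forall a, LAxiom a -> ProvFrom Theta a
| PF_hyp : forall a, Theta a -> ProvFrom Theta a
| PF_mp : forall a b, ProvFrom Theta a -> ProvFrom Theta (Fimp a b) ->
    ProvFrom Theta b
| PF_delta : forall s : nat -> Form, (forall i, ProvFrom Theta (s i)) ->
    ProvFrom Theta (Fdelta s).

Definition Prov (a : Form) : Prop := ProvFrom (fun _ => False) a.

Definition FEquiv (a b : Form) : Prop := Prov (Fimp a b) /\ Prov (Fimp b a).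

(** Congruence on Form regarded as a {delta, (+), not, 0}-algebra
    (0 is a constant, so it imposes no compatibility condition). *)
Definition is_congruence (R : Form -> Form -> Prop) : Prop :=
  (forall a, R a a) /\
  (forall a b, R a b -> R b a) /\
  (forall a b c, R a b -> R b c -> R a c) /\
  (forall a a' b b', R a a' -> R b b' -> R (Foplus a b) (Foplus a' b')) /\
  (forall a a', R a a' -> R (Fneg a) (Fneg a')) /\
  (forall s s' : nat -> Form, (forall i, R (s i) (s' i)) ->
      R (Fdelta s) (Fdelta s')).

Section Alg.
Variables (A : Type) (oplus : A -> A -> A) (neg : A -> A) (zero : A).

Definition mv_one : A := neg zero.
Definition mv_odot (a b : A) : A := neg (oplus (neg a) (neg b)).
Definition mv_ominus (a b : A) : A := mv_odot a (neg b).
Definition mv_join (a b : A) : A := oplus (neg (oplus (neg a) b)) b.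
Definition mv_le (a b : A) : Prop := mv_join a b = b.
Definition mv_d (a b : A) : A := oplus (mv_ominus a b) (mv_ominus b a).

Definition is_MV : Prop :=
  (forall x y z, oplus x (oplus y z) = oplus (oplus x y) z) /\
  (forall x y, oplus x y = oplus y x) /\
  (forall x, oplus x zero = x) /\
  (forall x, neg (neg x) = x) /\
  (forall x, oplus x (neg zero) = neg zero) /\
  (forall x y, oplus (neg (oplus (neg x) y)) y = oplus (neg (oplus (neg y) x)) x).

Variable delta : (nat -> A) -> A.
Definition dl_half (x : A) : A := delta (scons x (sconst zero)).

Definition is_delta_algebra : Prop :=
  is_MV /\
  (forall x : nat -> A,
      mv_d (delta x) (delta (scons (x 0) (sconst zero)))
      = delta (scons zero (stail x))) /\
  (forall x : nat -> A, dl_half (delta x) = delta (fun i => dl_half (x i))) /\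
  (forall x : A, delta (sconst x) = x) /\
  (forall x : nat -> A, delta (scons zero x) = dl_half (delta x)) /\
  (forall x y : nat -> A, mv_le (delta x) (delta (fun i => oplus (x i) (y i)))) /\
  (forall x y : A, dl_half (mv_ominus x y) = mv_ominus (dl_half x) (dl_half y)).
End Alg.

(** * The quotient Form / == (equivalence classes as predicates) *)
Definition FormQ : Type := { P : Form -> Prop | exists a, P = FEquiv a }.

Definition qcls (a : Form) : FormQ :=
  exist (fun P => exists a, P = FEquiv a) (FEquiv a) (ex_intro _ a eq_refl).

Definition qrep (q : FormQ) : Form :=
  proj1_sig (constructive_indefinite_description _ (proj2_sig q)).

Definition qneg (q : FormQ) : FormQ := qcls (Fneg (qrep q)).
Definition qoplus (p q : FormQ) : FormQ := qcls (Foplus (qrep p) (qrep q)).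
Definition qdelta (s : nat -> FormQ) : FormQ := qcls (Fdelta (fun i => qrep (s i))).
Definition qzero (a0 : Form) : FormQ := qcls (Fneg (Fimp a0 a0)).

From Stdlib Require Import FunctionalExtensionality PropExtensionality ProofIrrelevance ClassicalEpsilon.

(** Here
       a (+) b = not a -> b, a (-) b corresponds to not (a -> b), and the
       lattice join a v b corresponds to (a -> b) -> b.
    3. Each operation of the quotient FormQ is computed on classes
       (qcls), so every axiom of a delta-algebra reduces to one of the
       provable equivalences of layer 2.
    The main theorem collects the congruence property and these axioms. *)

Section DerivedRules.
Variable Theta : Form -> Prop.
Notation "|- a" := (ProvFrom Theta a) (at level 70).

Lemma imp_intro a b : |- a -> |- Fimp b a.
Proof. intro Ha. eapply PF_mp; [exact Ha | apply PF_ax; constructor]. Qed.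

Lemma imp_trans a b c : |- Fimp a b -> |- Fimp b c -> |- Fimp a c.
Proof.
  intros Hab Hbc. eapply PF_mp; [exact Hbc |].
  eapply PF_mp; [exact Hab | apply PF_ax; constructor].
Qed.

Lemma imp_elim_provable t x : |- t -> |- Fimp (Fimp t x) x.
Proof.
  intro Ht. eapply PF_mp; [apply (imp_intro t (Fimp x t) Ht) | apply PF_ax; constructor].
Qed.

(** A fixed theorem, used to derive reflexivity and double negation. *)
Definition Ftheorem : Form := Fimp (Fvar 0) (Fimp (Fvar 0) (Fvar 0)).

Lemma prov_Ftheorem : |- Ftheorem.
Proof. apply PF_ax; constructor. Qed.

Lemma imp_refl a : |- Fimp a a.
Proof.
  eapply imp_trans; [apply PF_ax, (Ax_L1 a Ftheorem) |].
  apply imp_elim_provable, prov_Ftheorem.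
Qed.

Lemma imp_antecedent a a' b : |- Fimp a' a -> |- Fimp (Fimp a b) (Fimp a' b).
Proof. intro H. eapply PF_mp; [exact H | apply PF_ax; constructor]. Qed.

Lemma imp_mp_formula y z : |- Fimp y (Fimp (Fimp y z) z).
Proof.
  eapply imp_trans; [apply PF_ax, (Ax_L1 y (Fimp z y)) | apply PF_ax; constructor].
Qed.

Lemma imp_exchange x y z : |- Fimp (Fimp x (Fimp y z)) (Fimp y (Fimp x z)).
Proof.
  eapply imp_trans; [apply PF_ax, (Ax_L2 x (Fimp y z) z) |].
  apply imp_antecedent, imp_mp_formula.
Qed.

Lemma imp_exchange_rule x y z : |- Fimp x (Fimp y z) -> |- Fimp y (Fimp x z).
Proof. intro H. eapply PF_mp; [exact H | apply imp_exchange]. Qed.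

Lemma imp_consequent a b b' : |- Fimp b b' -> |- Fimp (Fimp a b) (Fimp a b').
Proof.
  intro H. eapply PF_mp; [exact H |].
  apply imp_exchange_rule, PF_ax; constructor.
Qed.

Lemma dneg_elim x : |- Fimp (Fneg (Fneg x)) x.
Proof.
  eapply imp_trans; [apply PF_ax, (Ax_L1 (Fneg (Fneg x)) (Fneg (Fneg Ftheorem))) |].
  eapply imp_trans; [apply PF_ax, (Ax_L4 (Fneg Ftheorem) (Fneg x)) |].
  eapply imp_trans; [apply PF_ax, (Ax_L4 x Ftheorem) |].
  apply imp_elim_provable, prov_Ftheorem.
Qed.

Lemma dneg_intro x : |- Fimp x (Fneg (Fneg x)).
Proof.
  eapply PF_mp; [apply (dneg_elim (Fneg x)) | apply PF_ax, (Ax_L4 (Fneg (Fneg x)) x)].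
Qed.

Lemma contrapose a b : |- Fimp a b -> |- Fimp (Fneg b) (Fneg a).
Proof.
  intro H. eapply PF_mp; [| apply PF_ax, (Ax_L4 (Fneg a) (Fneg b))].
  eapply imp_trans; [apply dneg_elim |].
  eapply imp_trans; [exact H | apply dneg_intro].
Qed.

Lemma contrapose_formula a b : |- Fimp (Fimp a b) (Fimp (Fneg b) (Fneg a)).
Proof.
  eapply imp_trans; [apply imp_antecedent, (dneg_elim a) |].
  eapply imp_trans; [apply imp_consequent, (dneg_intro b) |].
  apply PF_ax, (Ax_L4 (Fneg a) (Fneg b)).
Qed.

Lemma delta_monotone s t :
  (forall i, |- Fimp (s i) (t i)) -> |- Fimp (Fdelta s) (Fdelta t).
Proof.
  intro H. eapply PF_mp; [apply PF_delta; exact H | apply PF_ax; constructor].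
Qed.

End DerivedRules.

Lemma equiv_refl a : FEquiv a a.
Proof. split; apply imp_refl. Qed.

Lemma equiv_sym a b : FEquiv a b -> FEquiv b a.
Proof. intros [? ?]; split; assumption. Qed.

Lemma equiv_trans a b c : FEquiv a b -> FEquiv b c -> FEquiv a c.
Proof. intros [? ?] [? ?]; split; eapply imp_trans; eassumption. Qed.

Lemma imp_equiv a a' b b' :
  FEquiv a a' -> FEquiv b b' -> FEquiv (Fimp a b) (Fimp a' b').
Proof.
  intros [? ?] [? ?]; split;
    (eapply imp_trans; [apply imp_antecedent; eassumption | apply imp_consequent; eassumption]).
Qed.

Lemma neg_equiv a a' : FEquiv a a' -> FEquiv (Fneg a) (Fneg a').
Proof. intros [? ?]; split; apply contrapose; assumption. Qed.

Lemma oplus_equiv a a' b b' :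
  FEquiv a a' -> FEquiv b b' -> FEquiv (Foplus a b) (Foplus a' b').
Proof. intros; apply imp_equiv; [apply neg_equiv |]; assumption. Qed.

Lemma delta_equiv s t : (forall i, FEquiv (s i) (t i)) -> FEquiv (Fdelta s) (Fdelta t).
Proof. intro H; split; apply delta_monotone; intro i; apply H. Qed.

Lemma FEquiv_congruence : is_congruence FEquiv.
Proof.
  exact (conj equiv_refl (conj equiv_sym (conj equiv_trans
          (conj oplus_equiv (conj neg_equiv delta_equiv))))).
Qed.

Lemma axiom_equiv a b : LAxiom (Fimp a b) -> LAxiom (Fimp b a) -> FEquiv a b.
Proof. intros; split; apply PF_ax; assumption. Qed.

(** Any two theorems are equivalent (they represent 1). *)
Lemma provable_equiv a b : Prov a -> Prov b -> FEquiv a b.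
Proof. intros; split; apply imp_intro; assumption. Qed.

(** 1 -> x == x; in particular a <= b in the quotient whenever a -> b is provable. *)
Lemma true_imp_equiv t x : Prov t -> FEquiv (Fimp t x) x.
Proof. intro; split; [apply imp_elim_provable; assumption | apply PF_ax; constructor]. Qed.

Lemma dneg_equiv x : FEquiv (Fneg (Fneg x)) x.
Proof. split; [apply dneg_elim | apply dneg_intro]. Qed.

Lemma contrapose_equiv a b : FEquiv (Fimp a b) (Fimp (Fneg b) (Fneg a)).
Proof. split; [apply contrapose_formula | apply PF_ax, (Ax_L4 b a)]. Qed.

(** All formulas not (c -> c) are equivalent: they represent 0. *)
Lemma zero_equiv a b : FEquiv (Fneg (Fimp a a)) (Fneg (Fimp b b)).
Proof. apply neg_equiv, provable_equiv; apply imp_refl. Qed.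

(** 1/2 a may use any representative of 0 in its tail. *)
Lemma half_equiv a a' c :
  FEquiv a a' -> FEquiv (Fdelta (scons a (sconst (Fneg (Fimp c c))))) (Fhalf a').
Proof. intro H; apply delta_equiv; intros [|i]; [exact H | apply zero_equiv]. Qed.

Lemma oplus_comm_equiv x y : FEquiv (Foplus x y) (Foplus y x).
Proof.
  eapply equiv_trans; [apply contrapose_equiv |].
  apply imp_equiv; [apply equiv_refl | apply dneg_equiv].
Qed.

Lemma oplus_assoc_equiv a b c : FEquiv (Foplus a (Foplus b c)) (Foplus (Foplus a b) c).
Proof.
  apply equiv_sym. unfold Foplus.
  eapply equiv_trans; [apply contrapose_equiv |].
  eapply equiv_trans; [apply imp_equiv; [apply equiv_refl | apply dneg_equiv] |].
  eapply equiv_trans; [split; apply imp_exchange |].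
  apply imp_equiv; [apply equiv_refl | apply (oplus_comm_equiv c b)].
Qed.

(** Adding the negation of a theorem (a copy of 0) changes nothing. *)
Lemma oplus_neg_provable x t : Prov t -> FEquiv (Foplus x (Fneg t)) x.
Proof.
  intro Ht. eapply equiv_trans; [apply equiv_sym, contrapose_equiv |].
  apply true_imp_equiv, Ht.
Qed.

(** The MV difference a (-) b = not(not a (+) not not b) is not (a -> b). *)
Lemma ominus_equiv a b :
  FEquiv (Fneg (Foplus (Fneg a) (Fneg (Fneg b)))) (Fneg (Fimp a b)).
Proof. apply neg_equiv, imp_equiv; apply dneg_equiv. Qed.

(** The MV join a v b = not(not a (+) b) (+) b is (a -> b) -> b. *)
Lemma join_equiv a b : FEquiv (Foplus (Fneg (Foplus (Fneg a) b)) b) (Fimp (Fimp a b) b).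
Proof.
  apply imp_equiv; [| apply equiv_refl].
  eapply equiv_trans; [apply dneg_equiv |].
  apply imp_equiv; [apply dneg_equiv | apply equiv_refl].
Qed.

(** Axiom (i) on formulas: H := delta(s_0, 0, 0, ...) lies below
    D := delta(s) by monotonicity, so the distance d(D, H) reduces to not (D -> 1/2 s_0),
    which (Δ1) and (Δ4) identify with delta(0, s_1, s_2, ...). *)
Lemma delta_distance_equiv (c : Form) (s : nat -> Form) :
  let Z := Fneg (Fimp c c) in
  let D := Fdelta s in
  let H := Fdelta (scons (s 0) (sconst Z)) in
  FEquiv (Foplus (Fneg (Fimp D H)) (Fneg (Fimp H D))) (Fdelta (scons Z (stail s))).
Proof.
  intros Z D H.
  assert (HD : Prov (Fimp H D)).
  { apply delta_monotone. intros [|i]; simpl; [apply imp_refl |].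
    (* 0 implies every formula *)
    eapply imp_trans; [apply contrapose, imp_intro, imp_refl | apply dneg_elim]. }
  eapply equiv_trans; [apply oplus_neg_provable, HD |].
  eapply equiv_trans; [apply neg_equiv, imp_equiv; [apply equiv_refl | apply half_equiv, equiv_refl] |].
  eapply equiv_trans; [apply axiom_equiv; [apply Ax_D1a | apply Ax_D1b] |].
  apply axiom_equiv; [apply Ax_D4a | apply Ax_D4b].
Qed.

Lemma FormQ_eq (x y : FormQ) : proj1_sig x = proj1_sig y -> x = y.
Proof.
  destruct x as [x hx], y as [y hy]; simpl; intro; subst.
  f_equal; apply proof_irrelevance.
Qed.

Lemma qcls_equiv a b : FEquiv a b -> qcls a = qcls b.
Proof.
  intro H. apply FormQ_eq; simpl. apply functional_extensionality; intro c.
  apply propositional_extensionality; split; intro;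
    eapply equiv_trans; eauto using equiv_sym.
Qed.

Lemma qcls_qrep q : q = qcls (qrep q).
Proof.
  apply FormQ_eq; simpl. unfold qrep.
  destruct (constructive_indefinite_description _ _) as [a Ha]; exact Ha.
Qed.

Lemma qcls_surj q : exists a, q = qcls a.
Proof. eexists; apply qcls_qrep. Qed.

Lemma qrep_qcls a : FEquiv (qrep (qcls a)) a.
Proof.
  pose proof (f_equal (@proj1_sig _ _) (qcls_qrep (qcls a))) as H; simpl in H.
  pose proof (equiv_refl a) as Ha. rewrite H in Ha. exact Ha.
Qed.

Lemma qneg_cls a : qneg (qcls a) = qcls (Fneg a).
Proof. apply qcls_equiv, neg_equiv, qrep_qcls. Qed.

Lemma qoplus_cls a b : qoplus (qcls a) (qcls b) = qcls (Foplus a b).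
Proof. apply qcls_equiv, oplus_equiv; apply qrep_qcls. Qed.

Lemma qdelta_cls x s : (forall i, x i = qcls (s i)) -> qdelta x = qcls (Fdelta s).
Proof.
  intro H; apply qcls_equiv, delta_equiv; intro i; rewrite H; apply qrep_qcls.
Qed.

Lemma qominus_cls a b : mv_ominus FormQ qoplus qneg (qcls a) (qcls b) = qcls (Fneg (Fimp a b)).
Proof.
  unfold mv_ominus, mv_odot. rewrite !qneg_cls, qoplus_cls, qneg_cls.
  apply qcls_equiv, ominus_equiv.
Qed.

Lemma qjoin_cls a b : mv_join FormQ qoplus qneg (qcls a) (qcls b) = qcls (Fimp (Fimp a b) b).
Proof.
  unfold mv_join. rewrite qneg_cls, qoplus_cls, qneg_cls, qoplus_cls.
  apply qcls_equiv, join_equiv.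
Qed.

Lemma FormQ_delta_const (q : FormQ) : qdelta (sconst q) = q.
Proof.
  destruct (qcls_surj q) as [a ->].
  rewrite (qdelta_cls _ (sconst a)) by reflexivity.
  apply qcls_equiv, axiom_equiv; constructor.
Qed.

Lemma FormQ_delta_oplus_le (x y : nat -> FormQ) :
  mv_le FormQ qoplus qneg (qdelta x) (qdelta (fun i => qoplus (x i) (y i))).
Proof.
  set (s := fun i => qrep (x i)). set (t := fun i => qrep (y i)).
  rewrite (qdelta_cls x s (fun i => qcls_qrep (x i))).
  rewrite (qdelta_cls _ (fun i => Foplus (s i) (t i)))
    by (intro i; rewrite (qcls_qrep (x i)), (qcls_qrep (y i)); apply qoplus_cls).
  unfold mv_le. rewrite qjoin_cls.
  apply qcls_equiv, true_imp_equiv, PF_ax, Ax_D5.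
Qed.

Section Quotient.
Variable a0 : Form.
Let Z : Form := Fneg (Fimp a0 a0).
Let qzero_cls : qzero a0 = qcls Z := eq_refl.

Lemma prov_one : Prov (Fneg Z).
Proof. eapply PF_mp; [apply imp_refl | apply dneg_intro]. Qed.

Lemma qhalf_cls a : dl_half FormQ (qzero a0) qdelta (qcls a) = qcls (Fhalf a).
Proof.
  unfold dl_half. rewrite (qdelta_cls _ (scons a (sconst Z))) by (intros [|i]; reflexivity).
  apply qcls_equiv, half_equiv, equiv_refl.
Qed.

(** The MV axioms: every element is a class, and each axiom is one of the
    equivalences above ((Ł3) for the last one, read through the join). *)
Lemma FormQ_MV : is_MV FormQ qoplus qneg (qzero a0).
Proof.
  repeat split; intros *;
    repeat match goal with q : FormQ |- _ => destruct (qcls_surj q) as [? ->]; clear q end;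
    rewrite ?qzero_cls; repeat (rewrite qneg_cls || rewrite qoplus_cls); apply qcls_equiv.
  - apply oplus_assoc_equiv.
  - apply oplus_comm_equiv.
  - apply oplus_neg_provable, imp_refl.
  - apply dneg_equiv.
  - apply provable_equiv; [apply imp_intro |]; apply prov_one.
  - eapply equiv_trans; [apply join_equiv |].
    eapply equiv_trans; [| apply equiv_sym, join_equiv].
    apply axiom_equiv; constructor.
Qed.

Lemma FormQ_delta_distance (x : nat -> FormQ) :
  mv_d FormQ qoplus qneg (qdelta x) (qdelta (scons (x 0) (sconst (qzero a0))))
  = qdelta (scons (qzero a0) (stail x)).
Proof.
  set (s := fun i => qrep (x i)).
  rewrite (qdelta_cls x s (fun i => qcls_qrep (x i))).
  rewrite (qdelta_cls _ (scons (s 0) (sconst Z)))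
    by (intros [|i]; [apply qcls_qrep | reflexivity]).
  rewrite (qdelta_cls _ (scons Z (stail s)))
    by (intros [|i]; [reflexivity | apply qcls_qrep]).
  unfold mv_d. rewrite !qominus_cls, qoplus_cls.
  apply qcls_equiv, delta_distance_equiv.
Qed.

Lemma FormQ_half_delta (x : nat -> FormQ) :
  dl_half FormQ (qzero a0) qdelta (qdelta x)
  = qdelta (fun i => dl_half FormQ (qzero a0) qdelta (x i)).
Proof.
  set (s := fun i => qrep (x i)).
  rewrite (qdelta_cls x s (fun i => qcls_qrep (x i))), qhalf_cls.
  rewrite (qdelta_cls _ (fun i => Fhalf (s i)))
    by (intro i; rewrite (qcls_qrep (x i)); apply qhalf_cls).
  apply qcls_equiv, axiom_equiv; [apply Ax_D2a | apply Ax_D2b].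
Qed.

Lemma FormQ_delta_shift (x : nat -> FormQ) :
  qdelta (scons (qzero a0) x) = dl_half FormQ (qzero a0) qdelta (qdelta x).
Proof.
  set (s := fun i => qrep (x i)).
  rewrite (qdelta_cls x s (fun i => qcls_qrep (x i))), qhalf_cls.
  rewrite (qdelta_cls _ (scons Z s)) by (intros [|i]; [reflexivity | apply qcls_qrep]).
  apply qcls_equiv, axiom_equiv; [apply Ax_D4b | apply Ax_D4a].
Qed.

Lemma FormQ_half_ominus (p q : FormQ) :
  dl_half FormQ (qzero a0) qdelta (mv_ominus FormQ qoplus qneg p q)
  = mv_ominus FormQ qoplus qneg (dl_half FormQ (qzero a0) qdelta p)
      (dl_half FormQ (qzero a0) qdelta q).
Proof.
  destruct (qcls_surj p) as [a ->], (qcls_surj q) as [b ->].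
  rewrite !qominus_cls, !qhalf_cls, qominus_cls.
  apply qcls_equiv, axiom_equiv; [apply Ax_D6a | apply Ax_D6b].
Qed.

End Quotient.

Theorem mainTheorem11 (a0 : Form) :
  is_congruence FEquiv /\
  is_delta_algebra FormQ qoplus qneg (qzero a0) qdelta.
Proof.
  split; [exact FEquiv_congruence |].
  exact (conj (FormQ_MV a0)
        (conj (FormQ_delta_distance a0)
        (conj (FormQ_half_delta a0)
        (conj FormQ_delta_const
        (conj (FormQ_delta_shift a0)
        (conj FormQ_delta_oplus_le (FormQ_half_ominus a0))))))).
Qed.
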